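(* Let $\omega>0$, $B>0$ and $\lambda\in\mathbb{R}$ with $-2\omega\le\lambda\le 0$. Let $\mathcal{D}_0\subset L^2(\mathbb{R}^2)$ be the set of functions $v$ that are twice differentiable on $\mathbb{R}^2\setminus\{x=0\}$, continuous across the line $x=0$, and satisfy the matching condition $\frac{\partial v}{\partial x}(0+,y)-\frac{\partial v}{\partial x}(0-,y)=\lambda y\, v(0,y)$ for all $y$. Let $H_{\mathrm{Sm}}(A)$ act on $\mathcal{D}_0$ as the differential expression $(i\nabla+A)^2+\omega^2y^2$ away from $x=0$, where $A=(-By,0)$, i.e. $(i\partial_x-By)^2-\partial_y^2+\omega^2y^2$ (the matching condition encoding the term $\lambda y\delta(x)$). Then $H_{\mathrm{Sm}}(A)\upharpoonright\mathcal{D}_0\ge 0$, i.e. $(H_{\mathrm{Sm}}(A)v,v)\ge0$ for all $v\in\mathcal{D}_0$; equivalently, for every $v\in\mathcal{D}_0$, $$\int_{\mathbb{R}^2}\Big(\big|i\partial_x v-Byv\big|^2+|\partial_y v|^2+\omega^2y^2|v|^2\Big)\,\mathrm{d}x\,\mathrm{d}y+\lambda\int_{\mathbb{R}}y\,|v(0,y)|^2\,\mathrm{d}y\ge0.$$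
   Context: $H_{\mathrm{Sm}}(A)$ is the formal operator $(i\nabla+A)^2+\omega^2y^2+\lambda y\delta(x)$ on $L^2(\mathbb{R}^2)$, where $A$ is the vector potential (Landau gauge $A=(-By,0)$) of a homogeneous magnetic field of intensity $B>0$ perpendicular to the plane. *)

From HB Require Import structures.
From mathcomp Require Import all_boot all_order all_algebra.
From mathcomp Require Import all_classical all_reals all_analysis.
Set Implicit Arguments. Unset Strict Implicit. Unset Printing Implicit Defensive.
Import Order.TTheory GRing.Theory Num.Theory.
Import numFieldNormedType.Exports.
Local Open Scope classical_set_scope.
Local Open Scope ring_scope.

(* A complex-valued function v on R^2 is represented by its real part p and
   imaginary part q : R * R -> R, i.e. v = p + i q, with points z = (x, y). *)

Notation leb2 R := ((@lebesgue_measure R) \x (@lebesgue_measure R))%E.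

Definition px (R : realType) (f : R * R -> R) (z : R * R) : R :=
  derive1 (fun t => f (t, z.2)) z.1.
Definition py (R : realType) (f : R * R -> R) (z : R * R) : R :=
  derive1 (fun t => f (z.1, t)) z.2.

(* f : R^2 -> R is twice (Frechet) differentiable at z: f is differentiable
   near z and its derivative, whose coordinates are (px f, py f), is
   differentiable at z. *)
Definition twice_differentiable_at (R : realType) (f : R * R -> R) (z : R * R) :=
  [/\ (\forall w \near z, differentiable f w),
      differentiable (px f) z & differentiable (py f) z].

Definition in_L2 (R : realType) (p q : R * R -> R) :=
  [/\ measurable_fun setT p, measurable_fun setT q &
      (\int[leb2 R]_z ((p z) ^+ 2 + (q z) ^+ 2)%:E < +oo)%E].

Definition D0 (R : realType) (lam : R) (p q : R * R -> R) :=
  [/\ in_L2 p q,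
      (forall z : R * R, z.1 != 0 ->
         twice_differentiable_at p z /\ twice_differentiable_at q z),
      (forall y : R, {for (0, y), continuous p} /\ {for (0, y), continuous q}) &
      (forall y : R, exists ap bp aq bq : R,
         [/\ (px p (x, y) @[x --> (0:R)^'+ ] --> ap),
             (px p (x, y) @[x --> (0:R)^'- ] --> bp),
             (px q (x, y) @[x --> (0:R)^'+ ] --> aq),
             (px q (x, y) @[x --> (0:R)^'- ] --> bq) &
             ap - bp = lam * y * p (0, y) /\ aq - bq = lam * y * q (0, y)])].

(* Bulk part of the quadratic form:
   int_{R^2} |i d_x v - B y v|^2 + |d_y v|^2 + w^2 y^2 |v|^2  (in [0, +oo]).
   With v = p + i q:  i d_x v - B y v = (- px q - B y p) + i (px p - B y q). *)
Definition bulk_form (R : realType) (B w : R) (p q : R * R -> R) : \bar R :=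
  (\int[leb2 R]_z
     ((px q z + B * z.2 * p z) ^+ 2 + (px p z - B * z.2 * q z) ^+ 2
      + (py p z) ^+ 2 + (py q z) ^+ 2
      + w ^+ 2 * z.2 ^+ 2 * ((p z) ^+ 2 + (q z) ^+ 2))%:E)%E.

Definition trace_sq (R : realType) (p q : R * R -> R) (y : R) : R :=
  (p (0, y)) ^+ 2 + (q (0, y)) ^+ 2.

From HB Require Import structures.
From mathcomp Require Import all_boot all_order all_algebra.
From mathcomp Require Import all_classical all_reals all_analysis.
From mathcomp Require Import ring lra measurable_realfun.
Import Order.TTheory GRing.Theory Num.Theory.
Import numFieldNormedType.Exports.
Local Open Scope classical_set_scope.
Local Open Scope ring_scope.

(* Fix a line y > 0 and put b = B y, c = w y, v = v(., y).  Expanding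
   |i v' - b v + i c v|^2 >= 0 (the terms in b cancel) gives
   -c (|v|^2)' <= |i v' - b v|^2 + c^2 |v|^2 on x > 0, and with -c in place
   of c the mirror inequality on x < 0.  Integrating from 0 to a point where
   |v|^2 is small, which exists because c^2 |v|^2 has a finite integral over
   a half-line, bounds the integral over each half-line from below by
   c |v(0,y)|^2.  Hence the x-integral of the bulk density is at least
   2 w y |v(0,y)|^2 >= -lam y |v(0,y)|^2; Tonelli then gives the claim, the
   lines y < 0 contributing a nonnegative boundary term since lam <= 0. *)

Section integral_monotonicity.
Context {d : measure_display} {T : measurableType d} {R : realType}.
Variable mu : {measure set T -> \bar R}.
Local Open Scope ereal_scope.

Lemma le_integral_ge0r (D : set T) (f g : T -> \bar R) :
  (forall x, D x -> 0 <= g x) -> (forall x, D x -> f x <= g x) ->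
  \int[mu]_(x in D) f x <= \int[mu]_(x in D) g x.
Proof.
move=> g0 fg; rewrite integralE.
have fneg0 : 0 <= \int[mu]_(x in D) f^\- x.
  by apply: integral_ge0 => x _; exact: funeneg_ge0.
apply: le_trans (leeB (lexx _) fneg0) _; rewrite sube0.
rewrite !ge0_integralE => [|x Dx|x _]; [|exact: g0|exact: funepos_ge0].
apply: le_ereal_sup => _ [h /= hf <-]; exists h => //= x.
apply: le_trans (hf x) _; rewrite /patch; case: ifP => // /[1!inE] Dx.
by rewrite funeposE ge_max fg// g0.
Qed.

Lemma subset_integral_ge0 (A B : set T) (f : T -> \bar R) :
  A `<=` B -> (forall x, B x -> 0 <= f x) ->
  \int[mu]_(x in A) f x <= \int[mu]_(x in B) f x.
Proof.
move=> AB f0; rewrite integral_mkcond [leRHS]integral_mkcond.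
apply: le_integral_ge0r => x _; rewrite /patch.
  by case: ifPn => // /[1!inE] /f0.
case: ifPn => [/[1!inE] /AB Bx|_]; first by rewrite ifT ?inE.
by case: ifPn => // /[1!inE] /f0.
Qed.

Lemma ex_lt_of_integral_lty (D : set T) (k : T -> R) (e : R) :
  measurable D -> mu D = +oo -> (0 < e)%R ->
  \int[mu]_(x in D) (k x)%:E < +oo -> exists2 x, D x & (k x < e)%R.
Proof.
move=> mD muD e0 kfin; apply: contrapT => small.
have ek x : D x -> (e <= k x)%R.
  by move=> Dx; rewrite leNgt; apply/negP => kxe; apply: small; exists x.
suff : +oo <= \int[mu]_(x in D) (k x)%:E by rewrite leNgt kfin.
have -> : +oo = \int[mu]_(x in D) (cst e%:E) x.
  by rewrite integral_cst// muD mulry gtr0_sg ?mul1e.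
apply: le_integral_ge0r => x Dx; rewrite lee_fin ?ek//.
exact: le_trans (ltW e0) (ek _ Dx).
Qed.

End integral_monotonicity.

Section real_line.
Context {R : realType}.
Notation mu := (@lebesgue_measure R).

Lemma is_derive_continuous [f : R -> R] [x d : R] :
  is_derive x (1 : R) f d -> {for x, continuous f}.
Proof. by case=> /derivable1_diffP /differentiable_continuous. Qed.

Lemma ftc_le_integral [F f k : R -> R] [D : set R] [a b : R] : a < b ->
  {in `[a, b], forall t : R, is_derive t (1 : R) F (f t)} ->
  {within `[a, b], continuous f} ->
  {in `[a, b], forall t : R, f t <= k t} ->
  {in `[a, b], forall t : R, D t} -> (forall t, D t -> 0 <= k t) ->
  ((F b - F a)%:E <= \int[mu]_(t in D) (k t)%:E)%E.
Proof.
move=> ab dF cf fk abD k0.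
have ab_cc : {subset `]a, b[ <= `[a, b]} by exact: subset_itv_oo_cc.
have dFab : derivable_oo_LRcontinuous F a b.
  have [aab bab] : a \in `[a, b] /\ b \in `[a, b] by rewrite !in_itv/= !lexx ltW.
  split.
  - by move=> t /ab_cc /dF [].
  - by apply: cvg_at_right_filter; exact: is_derive_continuous (dF a aab).
  - by apply: cvg_at_left_filter; exact: is_derive_continuous (dF b bab).
have F'f : {in `]a, b[, derive1 F =1 f}.
  by move=> t /ab_cc /dF dFt; rewrite derive1E derive_val.
rewrite EFinB -(continuous_FTC2 ab cf dFab F'f).
apply: (@le_trans _ _ (\int[mu]_(t in `[a, b]) (k t)%:E)%E).
  by apply: le_integral_ge0r => t tab; rewrite lee_fin; [exact/k0/abD | exact: fk].
by apply: subset_integral_ge0 => [t /abD|t /k0]; rewrite ?lee_fin.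
Qed.

(* Since the integral is finite and D has infinite measure, c G is small at
   some x in D; the gap G a - G x then controls the limit l. *)
Lemma lim_le_integral (F : set_system R) (D : set R) (G k : R -> R) (c l : R) :
  ProperFilter F -> measurable D -> mu D = +oo%E -> 0 < c ->
  G @ F --> l -> (forall x, D x -> 0 <= k x) ->
  (forall x, D x -> c * G x <= k x) ->
  (forall x, D x -> \forall a \near F,
     ((G a - G x)%:E <= \int[mu]_(t in D) (k t)%:E)%E) ->
  (l%:E <= \int[mu]_(t in D) (k t)%:E)%E.
Proof.
move=> FF mD muD c0 Gl k0 cGk gap.
set I := (\int[mu]_(t in D) (k t)%:E)%E.
have [->|Ioo] := eqVneq I +oo%E; first by rewrite leey.
have I0 : (0 <= I)%E by apply: integral_ge0 => t /k0; rewrite lee_fin.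
have Ilty : (I < +oo)%E by rewrite ltey.
have Ifin : I \is a fin_num by rewrite ge0_fin_numE.
rewrite -(fineK Ifin) lee_fin; apply/ler_addgt0Pr => e e0.
have [x Dx kx] := ex_lt_of_integral_lty mu D k (c * e) mD muD (mulr_gt0 c0 e0) Ilty.
have Gx : G x < e by rewrite -(ltr_pM2l c0); exact: le_lt_trans (cGk x Dx) kx.
suff : l - G x <= fine I by lra.
apply: cvgr_to_le (cvgB Gl (cvg_cst (G x))) _.
by near do rewrite -lee_fin EFinB fineK//; exact: gap.
Unshelve. all: by end_near.
Qed.

(* |i v' - b v|^2 + c^2 |v|^2 for v = p + i q and v' = p' + i q'. *)
Definition line_density (b c p q p' q' : R) : R :=
  (q' + b * p) ^+ 2 + (p' - b * q) ^+ 2 + c ^+ 2 * (p ^+ 2 + q ^+ 2).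

Lemma line_density_ge_mass (b c p q p' q' : R) :
  c ^+ 2 * (p ^+ 2 + q ^+ 2) <= line_density b c p q p' q'.
Proof. by rewrite lerDr addr_ge0 ?sqr_ge0. Qed.

Lemma line_density_ge0 (b c p q p' q' : R) : 0 <= line_density b c p q p' q'.
Proof.
apply: le_trans (line_density_ge_mass b c p q p' q').
by rewrite mulr_ge0 ?addr_ge0 ?sqr_ge0.
Qed.

Lemma line_density_ge_cross (b c p q p' q' : R) :
  - (c * (2 * (p * p' + q * q'))) <= line_density b c p q p' q'.
Proof.
rewrite -subr_ge0 opprK.
have -> : line_density b c p q p' q' + c * (2 * (p * p' + q * q'))
    = (p' - b * q + c * p) ^+ 2 + (q' + b * p + c * q) ^+ 2.
  by rewrite /line_density; ring.
by rewrite addr_ge0 ?sqr_ge0.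
Qed.

End real_line.

Section half_lines.
Context {R : realType}.
Notation mu := (@lebesgue_measure R).
Variables (P Q P' Q' k : R -> R) (b : R).

Let mass x := P x ^+ 2 + Q x ^+ 2.

Definition regular_pair_at (x : R) :=
  [/\ is_derive x (1 : R) P (P' x), is_derive x (1 : R) Q (Q' x),
      {for x, continuous P'} & {for x, continuous Q'}].

Lemma mass_gap_le_integral (c : R) (D : set R) (x0 x1 : R) : x0 < x1 ->
  {in `[x0, x1], forall x, D x} -> (forall x, D x -> 0 <= k x) ->
  {in `[x0, x1], forall x, regular_pair_at x} ->
  {in `[x0, x1], forall x, line_density b c (P x) (Q x) (P' x) (Q' x) <= k x} ->
  ((c * mass x0 - c * mass x1)%:E <= \int[mu]_(x in D) (k x)%:E)%E.
Proof.
move=> x01 x01D k0 reg kH.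
pose f x := - (c * (2 * (P x * P' x + Q x * Q' x))).
have dmass x : regular_pair_at x ->
    is_derive x (1 : R) (fun t => - (c * mass t)) (f x).
  case=> dP dQ _ _; rewrite /mass; apply: is_derive_eq.
  by rewrite /f -![_ *: _]/(_ * _); ring.
have cf : {within `[x0, x1], continuous f}.
  apply: continuous_in_subspaceT => x /[1!inE] /reg [dP dQ cP' cQ'].
  have cP := is_derive_continuous dP; have cQ := is_derive_continuous dQ.
  rewrite /f; apply: cvgN; apply: cvgM; first exact: cvg_cst.
  by apply: cvgM; [exact: cvg_cst | apply: cvgD; exact: cvgM].
have := ftc_le_integral x01 (fun x xI => dmass x (reg x xI)) cf _ x01D k0.
rewrite opprK addrC; apply=> x xI.
exact: le_trans (line_density_ge_cross _ _ _ _ _ _) (kH x xI).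
Qed.

Lemma continuous_mass x : {for x, continuous P} -> {for x, continuous Q} ->
  {for x, continuous mass}.
Proof. by move=> cP cQ; apply: cvgD; apply: cvgM. Qed.

Lemma mass_le_integral_gt0 (c : R) : 0 < c ->
  {for 0, continuous P} -> {for 0, continuous Q} ->
  (forall x, 0 < x -> regular_pair_at x) ->
  (forall x, 0 < x -> line_density b c (P x) (Q x) (P' x) (Q' x) <= k x) ->
  ((c * mass 0)%:E <= \int[mu]_(x in `]0%R, +oo[) (k x)%:E)%E.
Proof.
move=> c0 cP cQ reg kH.
have k0 x : 0 < x -> 0 <= k x.
  by move=> x0; exact: le_trans (line_density_ge0 _ _ _ _ _ _) (kH x x0).
apply: (@lim_le_integral _ 0^'+ _ (fun x => c * mass x) k c _ _ _ _ c0).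
- exact: measurable_itv.
- by rewrite lebesgue_measure_itv/= ltry.
- apply: cvg_at_right_filter; apply: cvgM; first exact: cvg_cst.
  exact: continuous_mass.
- by move=> x; rewrite /= in_itv/= andbT; exact: k0.
- move=> x; rewrite /= in_itv/= andbT => x0; rewrite mulrA -expr2.
  exact: le_trans (line_density_ge_mass _ _ _ _ _ _) (kH x x0).
move=> X; rewrite /= in_itv/= andbT => X0; near=> a.
have aX : a < X by near: a; exact: nbhs_right_lt.
have a0 : 0 < a by near: a; exact: nbhs_right_gt.
have aX0 x : x \in `[a, X] -> 0 < x.
  by rewrite in_itv/= => /andP[ax _]; exact: lt_le_trans ax.
apply: mass_gap_le_integral aX _ _ _ _ => [x /aX0|x|x /aX0|x /aX0].
- by rewrite /= in_itv/= andbT.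
- by rewrite /= in_itv/= andbT; exact: k0.
- exact: reg.
- exact: kH.
Unshelve. all: by end_near.
Qed.

Lemma mass_le_integral_lt0 (c : R) : 0 < c ->
  {for 0, continuous P} -> {for 0, continuous Q} ->
  (forall x, x < 0 -> regular_pair_at x) ->
  (forall x, x < 0 -> line_density b c (P x) (Q x) (P' x) (Q' x) <= k x) ->
  ((c * mass 0)%:E <= \int[mu]_(x in `]-oo, 0%R[) (k x)%:E)%E.
Proof.
move=> c0 cP cQ reg kH.
have k0 x : x < 0 -> 0 <= k x.
  by move=> x0; exact: le_trans (line_density_ge0 _ _ _ _ _ _) (kH x x0).
apply: (@lim_le_integral _ 0^'- _ (fun x => c * mass x) k c _ _ _ _ c0).
- exact: measurable_itv.
- by rewrite lebesgue_measure_itv/= ltNyr.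
- apply: cvg_at_left_filter; apply: cvgM; first exact: cvg_cst.
  exact: continuous_mass.
- by move=> x; rewrite /= in_itv/=; exact: k0.
- move=> x; rewrite /= in_itv/= => x0; rewrite mulrA -expr2.
  exact: le_trans (line_density_ge_mass _ _ _ _ _ _) (kH x x0).
move=> X; rewrite /= in_itv/= => X0; near=> a.
have Xa : X < a by near: a; exact: nbhs_left_gt.
have a0 : a < 0 by near: a; exact: nbhs_left_lt.
have Xa0 x : x \in `[X, a] -> x < 0.
  by rewrite in_itv/= => /andP[_ xa]; exact: le_lt_trans xa a0.
have -> : c * mass a - c * mass X = - c * mass X - - c * mass a by ring.
apply: mass_gap_le_integral Xa _ _ _ _ => [x /Xa0|x|x /Xa0|x /Xa0].
- by rewrite /= in_itv.
- by rewrite /= in_itv/=; exact: k0.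
- exact: reg.
- by rewrite /line_density sqrrN; exact: kH.
Unshelve. all: by end_near.
Qed.

End half_lines.

Section partial_derivatives.
Context {R : realType}.
Implicit Types (f : R * R -> R) (z : R * R).

Lemma is_derive_px f z : differentiable f z ->
  is_derive z.1 (1 : R) (fun t => f (t, z.2)) (px f z).
Proof.
move=> df; rewrite /px derive1E; apply: derivableP; apply/derivable1_diffP.
apply: (@differentiable_comp _ _ _ _ (fun t => (t, z.2)) f).
  exact: differentiable_pair.
by case: z df.
Qed.

Lemma continuous_xslice f z : differentiable f z ->
  {for z.1, continuous (fun t => f (t, z.2))}.
Proof. by move/is_derive_px/is_derive_continuous. Qed.

Lemma cvg_px f z : differentiable f z ->
  (harmonic n)^-1 * (f (z.1 + harmonic n, z.2) - f z) @[n --> \oo] --> px f z.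
Proof.
move=> /is_derive_px[df <-].
have := (cvgr_dnbhsP _ _ _).1 df harmonic.
move=> /(_ (conj (fun n => lt0r_neq0 (harmonic_gt0 n)) cvg_harmonic)).
apply: cvg_trans; apply: near_eq_cvg; apply: nearW => n /=.
rewrite /shift /= -[_ *: _]/(_ * _) [_%:A]mulr1 (addrC _ z.1).
by case: z {df}.
Qed.

Lemma measurable_px f (A : set (R * R)) : measurable A ->
  measurable_fun setT f -> (forall z, A z -> differentiable f z) ->
  measurable_fun A (px f).
Proof.
move=> mA mf df; apply: (measurable_fun_cvg (h := fun n z =>
  (harmonic n)^-1 * (f (z.1 + harmonic n, z.2) - f z))); last first.
  by move=> z Az; exact: cvg_px (df z Az).
move=> n; apply: measurable_funS (subsetT A) _ => //.
apply: measurable_funM => //; apply: measurable_funB => //.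
apply: measurableT_comp mf _; apply: measurable_fun_pair => //.
by apply: measurable_funD => //; exact: measurable_fst.
Qed.

End partial_derivatives.

Section xdensity.
Context {R : realType}.
Notation mu := (@lebesgue_measure R).
Variables (B w : R) (p q : R * R -> R).

Lemma measurable_offaxis : measurable [set z : R * R | z.1 != 0].
Proof.
have -> : [set z : R * R | z.1 != 0] = fst @^-1` (~` [set 0]).
  by apply/seteqP; split => z /= /eqP.
by rewrite -[_ @^-1` _]setTI; apply: measurable_fst => //; exact: measurableC.
Qed.

(* The integrand of [bulk_form] without the y-derivatives, cut off on the
   line x = 0, where [px] need not be a derivative. *)
Definition xdensity : R * R -> R :=
  (fun z => line_density (B * z.2) (w * z.2) (p z) (q z) (px p z) (px q z))
    \_ [set z | z.1 != 0].

Lemma xdensity_ge0 z : 0 <= xdensity z.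
Proof. by rewrite /xdensity patchE; case: ifP => // _; exact: line_density_ge0. Qed.

Lemma measurable_xdensity : measurable_fun setT p -> measurable_fun setT q ->
  (forall z, z.1 != 0 -> differentiable p z /\ differentiable q z) ->
  measurable_fun setT xdensity.
Proof.
move=> mp mq dpq; apply/(measurable_restrictT _ measurable_offaxis).
set A := [set z : R * R | z.1 != 0].
have mA : measurable A := measurable_offaxis.
have mpx : measurable_fun A (px p) by apply: measurable_px => // z /dpq[].
have mqx : measurable_fun A (px q) by apply: measurable_px => // z /dpq[].
have mpA : measurable_fun A p := measurable_funS measurableT (subsetT _) mp.
have mqA : measurable_fun A q := measurable_funS measurableT (subsetT _) mq.
have my : measurable_fun A snd.
  exact: measurable_funS measurableT (subsetT _) measurable_snd.
rewrite /line_density.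
by repeat first [ exact: measurable_cst | assumption | apply: measurable_funD
  | apply: measurable_funN | apply: measurable_funM | apply: measurable_funX ].
Qed.

Lemma integral_xdensity_le_bulk_form :
  (\int[leb2 R]_z (xdensity z)%:E <= bulk_form B w p q)%E.
Proof.
rewrite /bulk_form; apply: le_integral_ge0r => z _; rewrite lee_fin.
  by repeat first [exact: sqr_ge0 | apply: addr_ge0 | apply: mulr_ge0].
rewrite /xdensity patchE; case: ifP => _.
  2: by repeat first [exact: sqr_ge0 | apply: addr_ge0 | apply: mulr_ge0].
rewrite /line_density -[X in _ <= X]addrA -[X in _ <= X]addrA.
by rewrite lerD2l exprMn addrA lerDr addr_ge0 ?sqr_ge0.
Qed.

Hypotheses (mp : measurable_fun setT p) (mq : measurable_fun setT q).
Hypothesis twice_diff : forall z, z.1 != 0 ->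
  twice_differentiable_at p z /\ twice_differentiable_at q z.

Let diff z : z.1 != 0 -> differentiable p z /\ differentiable q z.
Proof. by move=> /twice_diff[[/nbhs_singleton dp _ _] [/nbhs_singleton dq _ _]]. Qed.

Lemma trace_le_xintegral (y : R) : 0 < w * y ->
  {for (0, y), continuous p} -> {for (0, y), continuous q} ->
  ((2 * (w * y) * trace_sq p q y)%:E <= \int[mu]_x (xdensity (x, y))%:E)%E.
Proof.
move=> c0 cp cq.
pose P x := p (x, y); pose Q x := q (x, y).
pose P' x := px p (x, y); pose Q' x := px q (x, y).
pose k x := xdensity (x, y).
have cy : {for 0, continuous (fun x : R => (x, y))}.
  exact: cvg_pair cvg_id (cvg_cst y).
have cP : {for 0, continuous P} := continuous_comp cy cp.
have cQ : {for 0, continuous Q} := continuous_comp cy cq.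
have reg x : x != 0 -> regular_pair_at P Q P' Q' x.
  move=> /(twice_diff (x, y))[[/nbhs_singleton dp dpx _] [/nbhs_singleton dq dqx _]].
  split; [exact: is_derive_px dp | exact: is_derive_px dq |
          exact: continuous_xslice dpx | exact: continuous_xslice dqx].
have kH x : x != 0 ->
    line_density (B * y) (w * y) (P x) (Q x) (P' x) (Q' x) <= k x.
  by move=> x0; rewrite /k /xdensity patchE mem_set.
have mk : measurable_fun setT (fun x => (k x)%:E).
  apply/measurable_EFinP/measurable_fun_pair1.
  exact: measurable_xdensity mp mq diff.
apply: (@le_trans _ _ (\int[mu]_(x in `]-oo, 0%R[ `|` `]0%R, +oo[) (k x)%:E)%E).
  2: by apply: subset_integral_ge0 => // x _; rewrite lee_fin xdensity_ge0.
rewrite ge0_integral_setU//=; first last.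
- apply/disj_setPS => x []; rewrite /= !in_itv/= andbT => x0 x1.
  by have := lt_trans x0 x1; rewrite ltxx.
- by move=> x _; rewrite lee_fin xdensity_ge0.
- exact: measurable_funTS.
have hneg := mass_le_integral_lt0 P Q P' Q' k (B * y) (w * y) c0 cP cQ
  (fun x x0 => reg x (ltr0_neq0 x0)) (fun x x0 => kH x (ltr0_neq0 x0)).
have hpos := mass_le_integral_gt0 P Q P' Q' k (B * y) (w * y) c0 cP cQ
  (fun x x0 => reg x (lt0r_neq0 x0)) (fun x x0 => kH x (lt0r_neq0 x0)).
apply: le_trans (leeD hneg hpos).
by rewrite -EFinD /trace_sq lee_fin /P /Q -mulrDl -mulr2n mulr_natl.
Qed.

Lemma trace_integral_le_xdensity (lam : R) : 0 < w -> -(2 * w) <= lam ->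
  (forall y, {for (0, y), continuous p} /\ {for (0, y), continuous q}) ->
  (\int[mu]_(y in `]0%R, +oo[) (- (lam * y * trace_sq p q y))%:E
   <= \int[leb2 R]_z (xdensity z)%:E)%E.
Proof.
move=> w0 lamlb cv.
have -> : (\int[leb2 R]_z (xdensity z)%:E
    = \int[mu]_y \int[mu]_x (xdensity (x, y))%:E)%E.
  apply: (fubini_tonelli2 (EFin \o _)) => [|z].
    apply/measurable_EFinP; exact: measurable_xdensity mp mq diff.
  by rewrite /= lee_fin xdensity_ge0.
apply: (@le_trans _ _ (\int[mu]_(y in `]0%R, +oo[)
    \int[mu]_x (xdensity (x, y))%:E)%E).
  apply: le_integral_ge0r => y; rewrite /= in_itv/= andbT => y0.
    by apply: integral_ge0 => x _; rewrite lee_fin xdensity_ge0.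
  apply: le_trans (trace_le_xintegral y (mulr_gt0 w0 y0) (cv y).1 (cv y).2).
  rewrite lee_fin -subr_ge0 opprK.
  have -> : 2 * (w * y) * trace_sq p q y + lam * y * trace_sq p q y
      = (lam + 2 * w) * (y * trace_sq p q y) by ring.
  have lam2w : 0 <= lam + 2 * w by rewrite -[2 * w]opprK subr_ge0.
  have trace0 : 0 <= trace_sq p q y by rewrite addr_ge0 ?sqr_ge0.
  by rewrite !mulr_ge0 // ltW.
apply: subset_integral_ge0 => // y _.
by apply: integral_ge0 => x _; rewrite lee_fin xdensity_ge0.
Qed.

End xdensity.

(* The boundary integral is split by the sign of y so that both pieces
   integrate nonnegative functions and no +oo - oo can arise. *)
Theorem mainTheorem1 (R : realType) (w B lam : R) (p q : R * R -> R) :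
  0 < w -> 0 < B -> -(2 * w) <= lam -> lam <= 0 ->
  D0 lam p q ->
  (\int[@lebesgue_measure R]_(y in `]0%R, +oo[) (- (lam * y * trace_sq p q y))%:E
   <= bulk_form B w p q
      + \int[@lebesgue_measure R]_(y in `]-oo, 0%R[) (lam * y * trace_sq p q y)%:E)%E.
Proof.
move=> w0 _ lamlb lam0 [[mp mq _] twice_diff cv _].
apply: le_trans (leeDl _ _); last first.
  apply: integral_ge0 => y; rewrite /= in_itv/= => y0.
  by rewrite lee_fin /trace_sq mulr_ge0 ?addr_ge0 ?sqr_ge0 // mulr_le0 // ltW.
apply: le_trans (integral_xdensity_le_bulk_form B w p q).
exact: trace_integral_le_xdensity.
Qed.
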